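(* Let $X$ be a vector space, $S$ a proper subset of $X$ with $0\in S$, $p:X\to\mathbb{R}$ a sub-linear functional, and $F:S\to\mathbb{R}$ with $F(0)=0$ and $F(s_1)+F(s_2)\le p(s_1+s_2)$ for all $s_1,s_2\in S$. Then $F$ has an extension $\hat F:X\to\mathbb{R}$ with $\hat F(s)=F(s)$ for $s\in S$ and $\hat F(x_1)+\hat F(x_2)\le p(x_1+x_2)$ for all $x_1,x_2\in X$.
   Context: $X$ is a vector space over $K\in\{\mathbb{R},\mathbb{C}\}$. A functional $p$ is sub-linear if $p(x+y)\le p(x)+p(y)$ and $p(tx)=tp(x)$ for all $x,y\in X$ and $t\ge0$. *)

From HB Require Import structures.
From mathcomp Require Import all_boot all_order all_algebra.
From mathcomp Require Import reals.
Set Implicit Arguments. Unset Strict Implicit. Unset Printing Implicit Defensive.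
Import Order.TTheory GRing.Theory Num.Theory.
Local Open Scope ring_scope.

Definition sublinear (R : realType) (X : lmodType R) (p : X -> R) : Prop :=
  (forall x y : X, p (x + y) <= p x + p y) /\
  (forall (t : R) (x : X), 0 <= t -> p (t *: x) = t * p x).

(* Extend F by x |-> -p(-x) off S.  Every value of the extension lies below
   p (on S because F s = F s + F 0 <= p s, off S because 0 = p 0 <= p x + p (-x)),
   and subadditivity gives p x1 - p (-x2) <= p (x1 + x2).  Hence the required
   inequality holds as soon as one of the two points lies outside S; when both
   lie in S it is the hypothesis on F. *)

From HB Require Import structures.
From mathcomp Require Import all_boot all_order all_algebra.
From mathcomp Require Import reals.
From mathcomp Require Import boolp.
Set Implicit Arguments. Unset Strict Implicit. Unset Printing Implicit Defensive.
Import Order.TTheory GRing.Theory Num.Theory.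
Local Open Scope ring_scope.

Section SublinearFacts.
Variables (R : realType) (X : lmodType R) (p : X -> R).
Hypothesis p_sub : sublinear p.

Lemma sublinear0 : p 0 = 0.
Proof. by have := p_sub.2 0 0 (lexx 0); rewrite scale0r mul0r. Qed.

Lemma sublinear_subD (x y : X) : p x - p (- y) <= p (x + y).
Proof.
rewrite lerBlDr; apply: le_trans (p_sub.1 _ _).
by rewrite addrK.
Qed.

Lemma sublinear_oppNr_le (x : X) : - p (- x) <= p x.
Proof. by have := sublinear_subD 0 x; rewrite sublinear0 sub0r add0r. Qed.

End SublinearFacts.

Section DominatedExtension.
Variables (R : realType) (X : lmodType R) (p : X -> R) (S : X -> Prop).
Variable F : X -> R.
Hypotheses (p_sub : sublinear p) (S0 : S 0) (F0 : F 0 = 0).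
Hypothesis F_dom : forall s1 s2, S s1 -> S s2 -> F s1 + F s2 <= p (s1 + s2).

Definition dominated_extension (x : X) : R :=
  if pselect (S x) then F x else - p (- x).

Lemma dominated_extension_eq (s : X) : S s -> dominated_extension s = F s.
Proof. by rewrite /dominated_extension; case: pselect. Qed.

Lemma dominated_extension_notin (x : X) :
  ~ S x -> dominated_extension x = - p (- x).
Proof. by rewrite /dominated_extension; case: pselect. Qed.

Lemma dominated_le (s : X) : S s -> F s <= p s.
Proof. by move=> Ss; have := F_dom S0 Ss; rewrite F0 !add0r. Qed.

Lemma dominated_extension_le (x : X) : dominated_extension x <= p x.
Proof.
have [Sx | NSx] := pselect (S x).
  by rewrite dominated_extension_eq //; exact: dominated_le.
by rewrite dominated_extension_notin //; exact: sublinear_oppNr_le.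
Qed.

Lemma dominated_extension_le_add (x1 x2 : X) :
  dominated_extension x1 + dominated_extension x2 <= p (x1 + x2).
Proof.
have [Sx2 | NSx2] := pselect (S x2); last first.
  rewrite [dominated_extension x2]dominated_extension_notin //.
  apply: le_trans (sublinear_subD p_sub x1 x2).
  by rewrite lerD2r; exact: dominated_extension_le.
rewrite [dominated_extension x2]dominated_extension_eq //.
have [Sx1 | NSx1] := pselect (S x1).
  by rewrite dominated_extension_eq //; exact: F_dom.
rewrite dominated_extension_notin // addrC [x1 + x2]addrC.
apply: le_trans (sublinear_subD p_sub x2 x1).
by rewrite lerD2r; exact: dominated_le.
Qed.

End DominatedExtension.

Theorem corollary2 (R : realType) (X : lmodType R) (S : X -> Prop)
  (p : X -> R) (F : X -> R) :
  ~ (forall x : X, S x) ->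
  S 0 ->
  sublinear p ->
  F 0 = 0 ->
  (forall s1 s2 : X, S s1 -> S s2 -> F s1 + F s2 <= p (s1 + s2)) ->
  exists Fh : X -> R,
    (forall s : X, S s -> Fh s = F s) /\
    (forall x1 x2 : X, Fh x1 + Fh x2 <= p (x1 + x2)).
Proof.
move=> _ S0 p_sub F0 F_dom.
exists (dominated_extension p S F); split.
  exact: dominated_extension_eq.
exact: dominated_extension_le_add.
Qed.
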